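(* Let $H_1$ and $H_2$ be reduced valuation monoids such that their quotient groups $\mathsf{q}(H_1)$ and $\mathsf{q}(H_2)$ are isomorphic. Then the reduced finitary power monoids $\mathcal{P}_{\mathrm{fin},1}(H_1)$ and $\mathcal{P}_{\mathrm{fin},1}(H_2)$ are isomorphic.
   Context: All monoids are written multiplicatively. A commutative monoid $H$ is cancellative if $ac=bc$ implies $a=b$ for all $a,b,c\in H$. For a commutative cancellative monoid $H$, $\mathsf{q}(H)$ denotes its quotient (Grothendieck) group, with $H\subseteq \mathsf{q}(H)$ and $\mathsf{q}(H)=\{ab^{-1}: a,b\in H\}$. A commutative cancellative monoid $H$ is a valuation monoid if for every $x\in\mathsf{q}(H)$ we have $x\in H$ or $x^{-1}\in H$; it is reduced if its only invertible element is the identity $1$. For a monoid $H$ with identity $1$, $\mathcal{P}_{\mathrm{fin},1}(H)$ is the set of all finite subsets of $H$ containing $1$, which is a monoid under setwise multiplication $(X,Y)\mapsto\{xy: x\in X, y\in Y\}$ with identity $\{1\}$. *)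

From Stdlib Require Import List.

Record cmonoid := CMonoid {
  mcar :> Type;
  mmul : mcar -> mcar -> mcar;
  mone : mcar;
  mmulA : forall a b c, mmul a (mmul b c) = mmul (mmul a b) c;
  mmulC : forall a b, mmul a b = mmul b a;
  mmul1 : forall a, mmul mone a = a
}.
Arguments mmul {c0} _ _.
Arguments mone {c0}.

Record cgroup := CGroup {
  gcar :> Type;
  gmul : gcar -> gcar -> gcar;
  gone : gcar;
  ginv : gcar -> gcar;
  gmulA : forall a b c, gmul a (gmul b c) = gmul (gmul a b) c;
  gmulC : forall a b, gmul a b = gmul b a;
  gmul1 : forall a, gmul gone a = a;
  gmulV : forall a, gmul (ginv a) a = gone
}.
Arguments gmul {c0} _ _.
Arguments gone {c0}.
Arguments ginv {c0} _.

Definition cancellative (H : cmonoid) : Prop :=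
  forall a b c : H, mmul a c = mmul b c -> a = b.

Definition reduced (H : cmonoid) : Prop :=
  forall u : H, (exists v : H, mmul u v = mone) -> u = mone.

Definition is_quotient_group (H : cmonoid) (G : cgroup) (f : H -> G) : Prop :=
  (forall a b, f a = f b -> a = b) /\
  f mone = gone /\
  (forall a b, f (mmul a b) = gmul (f a) (f b)) /\
  (forall x : G, exists a b : H, x = gmul (f a) (ginv (f b))).

Definition valuation_monoid (H : cmonoid) : Prop :=
  cancellative H /\
  exists (G : cgroup) (f : H -> G), is_quotient_group H G f /\
    forall x : G, (exists a, f a = x) \/ (exists a, f a = ginv x).

Definition group_iso (G1 G2 : cgroup) : Prop :=
  exists phi : G1 -> G2,
    (forall x y, phi x = phi y -> x = y) /\
    (forall y, exists x, phi x = y) /\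
    (forall x y, phi (gmul x y) = gmul (phi x) (phi y)).

Definition finite_subset {T : Type} (X : T -> Prop) : Prop :=
  exists l : list T, forall x, X x -> In x l.

Definition Pfin1 (H : cmonoid) (X : H -> Prop) : Prop :=
  finite_subset X /\ X mone.

Definition setmul {H : cmonoid} (X Y : H -> Prop) : H -> Prop :=
  fun z => exists x y, X x /\ Y y /\ z = mmul x y.

Definition set1 {H : cmonoid} : H -> Prop := fun z => z = mone.

Definition Pfin1_iso (H1 H2 : cmonoid) : Prop :=
  exists Phi : (H1 -> Prop) -> (H2 -> Prop),
    (forall X, Pfin1 H1 X -> Pfin1 H2 (Phi X)) /\
    (forall X Y, Pfin1 H1 X -> Pfin1 H1 Y -> Phi X = Phi Y -> X = Y) /\
    (forall Y, Pfin1 H2 Y -> exists X, Pfin1 H1 X /\ Phi X = Y) /\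
    Phi set1 = set1 /\
    (forall X Y, Pfin1 H1 X -> Pfin1 H1 Y -> Phi (setmul X Y) = setmul (Phi X) (Phi Y)).

From Stdlib Require Import List Classical FunctionalExtensionality PropExtensionality.

(* Let H be a reduced valuation monoid embedded in its quotient group G.
   "a divides b", i.e. b ∈ a·H, is a total preorder on G, and it is antisymmetric
   because H is reduced.  So a finite nonempty S ⊆ G has a least element m, and
   m⁻¹S is the unique translate of S that lies in H and contains 1.  Sending S to
   this normalized translate identifies P_fin,1(H) with the monoid of finite
   nonempty subsets of G modulo translation, which depends only on G.  Hence if
   H1 and H2 embed into the same group, X ↦ (normalized translate of X in H2) is
   an isomorphism P_fin,1(H1) ≅ P_fin,1(H2) with inverse of the same shape. *)

Lemma gmulr1 (G : cgroup) (a : G) : gmul a gone = a.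
Proof. rewrite gmulC; apply gmul1. Qed.

Lemma gmulrV (G : cgroup) (a : G) : gmul a (ginv a) = gone.
Proof. rewrite gmulC; apply gmulV. Qed.

Lemma gmulK (G : cgroup) (a b : G) : gmul (ginv a) (gmul a b) = b.
Proof. rewrite gmulA, gmulV, gmul1; reflexivity. Qed.

Lemma gmulI (G : cgroup) (c a b : G) : gmul c a = gmul c b -> a = b.
Proof. intros E. rewrite <- (gmulK _ c a), E, gmulK. reflexivity. Qed.

Lemma ginv_unique (G : cgroup) (a b : G) : gmul a b = gone -> b = ginv a.
Proof. intros E. apply (gmulI _ a). rewrite E, gmulrV. reflexivity. Qed.

Lemma ginvK (G : cgroup) (a : G) : ginv (ginv a) = a.
Proof. symmetry; apply ginv_unique, gmulV. Qed.

Lemma ginv1 (G : cgroup) : ginv (@gone G) = gone.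
Proof. symmetry; apply ginv_unique, gmul1. Qed.

Lemma gmulACA (G : cgroup) (a b c d : G) :
  gmul (gmul a b) (gmul c d) = gmul (gmul a c) (gmul b d).
Proof. rewrite !gmulA, <- (gmulA _ a b c), (gmulC _ b c), gmulA. reflexivity. Qed.

Lemma ginvM (G : cgroup) (a b : G) : ginv (gmul a b) = gmul (ginv a) (ginv b).
Proof. symmetry; apply ginv_unique. rewrite gmulACA, !gmulrV, gmul1. reflexivity. Qed.

Lemma ginv_div (G : cgroup) (a b : G) : ginv (gmul a (ginv b)) = gmul b (ginv a).
Proof. rewrite ginvM, ginvK, gmulC. reflexivity. Qed.

Lemma ghom1 (G1 G2 : cgroup) (phi : G1 -> G2) :
  (forall x y, phi (gmul x y) = gmul (phi x) (phi y)) -> phi gone = gone.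
Proof. intros M. apply (gmulI _ (phi gone)). rewrite <- M, gmul1, gmulr1. reflexivity. Qed.

Lemma ghomV (G1 G2 : cgroup) (phi : G1 -> G2) (x : G1) :
  (forall x y, phi (gmul x y) = gmul (phi x) (phi y)) -> phi (ginv x) = ginv (phi x).
Proof. intros M. apply ginv_unique. rewrite <- M, gmulrV. apply ghom1, M. Qed.

Lemma predext {A : Type} (X Y : A -> Prop) : (forall z, X z <-> Y z) -> X = Y.
Proof.
  intros E. apply functional_extensionality; intros z.
  apply propositional_extensionality, E.
Qed.

Definition img {A B : Type} (F : A -> B) (X : A -> Prop) : B -> Prop :=
  fun z => exists x, X x /\ z = F x.

Lemma img_id {A : Type} (X : A -> Prop) : img (fun x => x) X = X.
Proof.
  apply predext; intros z. split; [intros [x [Xx ->]]; exact Xx | intros Xz; exists z; auto].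
Qed.

Lemma img_comp {A B C : Type} (F1 : A -> B) (F2 : B -> C) (X : A -> Prop) :
  img F2 (img F1 X) = img (fun x => F2 (F1 x)) X.
Proof.
  apply predext; intros z. split.
  - intros [w [[x [Xx ->]] ->]]. exists x; auto.
  - intros [x [Xx ->]]. exists (F1 x). split; [exists x; auto | reflexivity].
Qed.

Lemma img_inj {A B : Type} (F : A -> B) (X Y : A -> Prop) :
  (forall a b, F a = F b -> a = b) -> img F X = img F Y -> X = Y.
Proof.
  intros I.
  assert (Sub : forall X Y, img F X = img F Y -> forall x, X x -> Y x).
  { intros X' Y' E x Xx.
    assert (Yx : img F Y' (F x)) by (rewrite <- E; exists x; auto).
    destruct Yx as [y [Yy Ey]]. rewrite (I _ _ Ey). exact Yy. }
  intros E. apply predext; intros x. split; apply Sub; auto.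
Qed.

Lemma finite_img {A B : Type} (F : A -> B) (X : A -> Prop) :
  finite_subset X -> finite_subset (img F X).
Proof.
  intros [l Hl]. exists (map F l). intros z [x [Xx ->]]. apply in_map, Hl, Xx.
Qed.

Lemma finite_preimage {A B : Type} (F : A -> B) (L : list B) :
  (forall a b, F a = F b -> a = b) -> finite_subset (fun a => In (F a) L).
Proof.
  intros I. induction L as [|b L [l Hl]].
  - exists nil. intros a [].
  - destruct (classic (exists a, F a = b)) as [[a0 E0]|N].
    + exists (a0 :: l). intros a [E|Ia]; [left; apply I; congruence | right; apply Hl, Ia].
    + exists l. intros a [E|Ia]; [exfalso; apply N; eauto | apply Hl, Ia].
Qed.

Lemma finite_img_inj {A B : Type} (F : A -> B) (X : A -> Prop) :
  (forall a b, F a = F b -> a = b) -> finite_subset (img F X) -> finite_subset X.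
Proof.
  intros I [L HL]. destruct (finite_preimage F L I) as [l Hl].
  exists l. intros x Xx. apply Hl, HL. exists x; auto.
Qed.

Definition translate {G : cgroup} (h : G) (S : G -> Prop) : G -> Prop := img (gmul h) S.

Definition gsetmul {G : cgroup} (S T : G -> Prop) : G -> Prop :=
  fun z => exists s t, S s /\ T t /\ z = gmul s t.

Lemma translate_translate (G : cgroup) (a b : G) (S : G -> Prop) :
  translate a (translate b S) = translate (gmul a b) S.
Proof.
  unfold translate. rewrite img_comp. f_equal.
  apply functional_extensionality; intros x. apply gmulA.
Qed.

Lemma translate1 (G : cgroup) (S : G -> Prop) : translate gone S = S.
Proof.
  unfold translate. replace (gmul gone) with (fun x : G => x); [apply img_id|].
  apply functional_extensionality; intros x. symmetry; apply gmul1.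
Qed.

Lemma translateK (G : cgroup) (g : G) (S : G -> Prop) :
  translate (ginv g) (translate g S) = S.
Proof. rewrite translate_translate, gmulV. apply translate1. Qed.

Lemma translate_gsetmul (G : cgroup) (g h : G) (S T : G -> Prop) :
  translate (gmul g h) (gsetmul S T) = gsetmul (translate g S) (translate h T).
Proof.
  apply predext; intros z. split.
  - intros [w [[s [t [Ss [Tt ->]]]] ->]]. exists (gmul g s), (gmul h t).
    split; [exists s; auto | split; [exists t; auto | apply gmulACA]].
  - intros [u [v [[s [Ss ->]] [[t [Tt ->]] ->]]]]. exists (gmul s t).
    split; [exists s, t; auto | apply gmulACA].
Qed.

Lemma img_setmul (H : cmonoid) (G : cgroup) (F : H -> G) (X Y : H -> Prop) :
  (forall a b, F (mmul a b) = gmul (F a) (F b)) ->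
  img F (setmul X Y) = gsetmul (img F X) (img F Y).
Proof.
  intros M. apply predext; intros z. split.
  - intros [w [[x [y [Xx [Yy ->]]]] ->]]. exists (F x), (F y).
    split; [exists x; auto | split; [exists y; auto | apply M]].
  - intros [u [v [[x [Xx ->]] [[y [Yy ->]] ->]]]]. exists (mmul x y).
    split; [exists x, y; auto | symmetry; apply M].
Qed.

Lemma img_set1 (H : cmonoid) (G : cgroup) (F : H -> G) :
  F mone = gone -> img F set1 = (fun z => z = gone).
Proof.
  intros O. apply predext; intros z. unfold set1. split.
  - intros [x [-> ->]]. exact O.
  - intros ->. exists mone. auto.
Qed.

Section FiniteMinimum.

Variables (A : Type) (R : A -> A -> Prop).
Hypothesis R_total : forall a b, R a b \/ R b a.
Hypothesis R_trans : forall a b c, R a b -> R b c -> R a c.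

Lemma list_has_min (S : A -> Prop) (l : list A) :
  (exists s, S s /\ In s l) -> exists m, S m /\ forall s, S s -> In s l -> R m s.
Proof.
  assert (R_refl : forall a, R a a) by (intros a; destruct (R_total a a); assumption).
  induction l as [|a l IH]; intros [s0 [S0 I0]]; [destruct I0|].
  destruct (classic (exists s, S s /\ In s l)) as [Ex|Nx].
  - destruct (IH Ex) as [m [Sm Hm]].
    destruct (classic (S a /\ R a m)) as [[Sa Ram]|Na].
    + exists a. split; [exact Sa|]. intros s Ss [<-|Is]; eauto.
    + exists m. split; [exact Sm|]. intros s Ss [<-|Is]; [|auto].
      destruct (R_total a m); [exfalso; auto | assumption].
  - destruct I0 as [<-|I0]; [|exfalso; eauto].
    exists a. split; [exact S0|]. intros s Ss [<-|Is]; [apply R_refl | exfalso; eauto].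
Qed.

Lemma finite_has_min (S : A -> Prop) :
  finite_subset S -> (exists s, S s) -> exists m, S m /\ forall s, S s -> R m s.
Proof.
  intros [l Hl] [s0 S0]. destruct (list_has_min S l) as [m [Sm Hm]]; [eauto|].
  exists m. auto.
Qed.

End FiniteMinimum.

Record reduced_valuation_embedding {H : cmonoid} {G : cgroup} (f : H -> G) : Prop := {
  emb_inj : forall a b, f a = f b -> a = b;
  emb_one : f mone = gone;
  emb_mul : forall a b, f (mmul a b) = gmul (f a) (f b);
  emb_reduced : reduced H;
  emb_total : forall x : G, (exists a, f a = x) \/ (exists a, f a = ginv x) }.

Arguments emb_inj {H G f}.
Arguments emb_one {H G f}.
Arguments emb_mul {H G f}.
Arguments emb_reduced {H G f}.
Arguments emb_total {H G f}.

Lemma transfer_div (H : cmonoid) (G0 G : cgroup) (f0 : H -> G0) (f : H -> G) (a b c : H) :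
  (forall a b, f0 a = f0 b -> a = b) ->
  (forall a b, f0 (mmul a b) = gmul (f0 a) (f0 b)) ->
  (forall a b, f (mmul a b) = gmul (f a) (f b)) ->
  f0 c = gmul (f0 a) (ginv (f0 b)) -> f c = gmul (f a) (ginv (f b)).
Proof.
  intros I0 M0 M E.
  assert (Ecb : mmul c b = a).
  { apply I0. rewrite M0, E, <- gmulA, gmulV, gmulr1. reflexivity. }
  rewrite <- Ecb, M, <- gmulA, gmulrV, gmulr1. reflexivity.
Qed.

Lemma quotient_embedding (H : cmonoid) (G : cgroup) (f : H -> G) :
  valuation_monoid H -> reduced H -> is_quotient_group H G f ->
  reduced_valuation_embedding f.
Proof.
  intros [_ [G0 [f0 [[I0 [_ [M0 _]]] T0]]]] R [I [O [M D]]].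
  split; auto.
  intros x. destruct (D x) as [a [b ->]].
  destruct (T0 (gmul (f0 a) (ginv (f0 b)))) as [[c E]|[c E]].
  - left. exists c. exact (transfer_div H G0 G f0 f a b c I0 M0 M E).
  - right. exists c. rewrite ginv_div in *. exact (transfer_div H G0 G f0 f b a c I0 M0 M E).
Qed.

Lemma embedding_comp_iso (H : cmonoid) (G1 G2 : cgroup) (f : H -> G1) (phi : G1 -> G2) :
  reduced_valuation_embedding f ->
  (forall x y, phi x = phi y -> x = y) -> (forall y, exists x, phi x = y) ->
  (forall x y, phi (gmul x y) = gmul (phi x) (phi y)) ->
  reduced_valuation_embedding (fun a => phi (f a)).
Proof.
  intros [I O M R T] Pi Ps Pm. split.
  - intros a b E. apply I, Pi, E.
  - rewrite O. apply ghom1, Pm.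
  - intros a b. rewrite M, Pm. reflexivity.
  - exact R.
  - intros x. destruct (Ps x) as [y <-].
    destruct (T y) as [[a <-]|[a E]]; [left | right]; exists a; [reflexivity|].
    rewrite E. apply ghomV, Pm.
Qed.

Section Normalize.

Context {H : cmonoid} {G : cgroup} (f : H -> G).
Hypothesis Hf : reduced_valuation_embedding f.

Lemma emb_unit_eq1 (x : G) : (exists a, f a = x) -> (exists b, f b = ginv x) -> x = gone.
Proof.
  intros [a Ea] [b Eb].
  assert (b1 : b = mone).
  { apply (emb_reduced Hf). exists a. apply (emb_inj Hf).
    rewrite (emb_mul Hf), (emb_one Hf), Ea, Eb. apply gmulV. }
  rewrite b1, (emb_one Hf) in Eb. rewrite <- (ginvK _ x), <- Eb. apply ginv1.
Qed.

Definition divides (a b : G) : Prop := exists y, f y = gmul (ginv a) b.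

Lemma divides_total (a b : G) : divides a b \/ divides b a.
Proof.
  destruct (emb_total Hf (gmul (ginv a) b)) as [[y E]|[y E]]; [left | right]; exists y.
  - exact E.
  - rewrite E, ginvM, ginvK, gmulC. reflexivity.
Qed.

Lemma divides_trans (a b c : G) : divides a b -> divides b c -> divides a c.
Proof.
  intros [y1 E1] [y2 E2]. exists (mmul y1 y2).
  rewrite (emb_mul Hf), E1, E2, <- gmulA, (gmulA _ b), gmulrV, gmul1. reflexivity.
Qed.

Definition normalizer (g : G) (S : G -> Prop) : Prop :=
  (forall z, translate g S z -> exists y, f y = z) /\ translate g S gone.

Definition normalize (S : G -> Prop) : H -> Prop :=
  fun y => exists g, normalizer g S /\ translate g S (f y).

Lemma normalizer_exists (S : G -> Prop) :
  finite_subset S -> (exists s, S s) -> exists g, normalizer g S.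
Proof.
  intros FS NS.
  destruct (finite_has_min G divides divides_total divides_trans S FS NS) as [m [Sm Hm]].
  exists (ginv m). split.
  - intros z [s [Ss ->]]. apply Hm, Ss.
  - exists m. split; [exact Sm | symmetry; apply gmulV].
Qed.

Lemma normalizer_unique (g g' : G) (S : G -> Prop) :
  normalizer g S -> normalizer g' S -> g = g'.
Proof.
  intros [Ig [s [Ss Es]]] [Ig' [s' [Ss' Es']]].
  symmetry in Es, Es'. apply ginv_unique in Es, Es'. subst s s'.
  assert (E : gmul g (ginv g') = gone).
  { apply emb_unit_eq1.
    - apply Ig. exists (ginv g'); auto.
    - rewrite ginv_div. apply Ig'. exists (ginv g); auto. }
  apply ginv_unique in E. rewrite <- (ginvK _ g), <- E. apply ginvK.
Qed.

Lemma img_normalize (g : G) (S : G -> Prop) :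
  normalizer g S -> img f (normalize S) = translate g S.
Proof.
  intros N. apply predext; intros z. split.
  - intros [y [[g' [N' Ty]] ->]]. rewrite (normalizer_unique g g' S N N'). exact Ty.
  - intros Tz. destruct (proj1 N z Tz) as [y <-]. exists y. split; [exists g; auto | reflexivity].
Qed.

Lemma Pfin1_normalize (g : G) (S : G -> Prop) :
  finite_subset S -> normalizer g S -> Pfin1 H (normalize S).
Proof.
  intros FS N. split.
  - apply (finite_img_inj f _ (emb_inj Hf)). rewrite (img_normalize g S N).
    apply finite_img, FS.
  - assert (T1 : img f (normalize S) gone) by (rewrite (img_normalize g S N); exact (proj2 N)).
    destruct T1 as [y [Ny E]]. rewrite <- (emb_one Hf) in E.
    apply (emb_inj Hf) in E. subst y. exact Ny.
Qed.

Lemma normalizer_img (X : H -> Prop) : X mone -> normalizer gone (img f X).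
Proof.
  intros X1. unfold normalizer. rewrite translate1. split.
  - intros z [x [_ ->]]. eauto.
  - exists mone. split; [exact X1 | symmetry; apply (emb_one Hf)].
Qed.

Lemma normalize_img (X : H -> Prop) : X mone -> normalize (img f X) = X.
Proof.
  intros X1. apply (img_inj f _ _ (emb_inj Hf)).
  rewrite (img_normalize _ _ (normalizer_img X X1)). apply translate1.
Qed.

Lemma normalizer_translate (g h : G) (S : G -> Prop) :
  normalizer g S -> normalizer (gmul g (ginv h)) (translate h S).
Proof.
  unfold normalizer. rewrite translate_translate, <- gmulA, gmulV, gmulr1. auto.
Qed.

Lemma normalize_translate (g h : G) (S : G -> Prop) :
  normalizer g S -> normalize (translate h S) = normalize S.
Proof.
  intros N. apply (img_inj f _ _ (emb_inj Hf)).
  rewrite (img_normalize _ _ (normalizer_translate g h S N)), (img_normalize g S N).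
  rewrite translate_translate, <- gmulA, gmulV, gmulr1. reflexivity.
Qed.

Lemma normalize_inj (g g' : G) (S S' : G -> Prop) :
  normalizer g S -> normalizer g' S' -> normalize S = normalize S' ->
  S = translate (gmul (ginv g) g') S'.
Proof.
  intros N N' E.
  rewrite <- translate_translate, <- (img_normalize g' S' N'), <- E, (img_normalize g S N).
  symmetry; apply translateK.
Qed.

Lemma normalizer_gsetmul (g h : G) (S T : G -> Prop) :
  normalizer g S -> normalizer h T -> normalizer (gmul g h) (gsetmul S T).
Proof.
  unfold normalizer. rewrite translate_gsetmul. intros [IS S1] [IT T1]. split.
  - intros z [u [v [Su [Tv ->]]]].
    destruct (IS u Su) as [a <-]. destruct (IT v Tv) as [b <-].
    exists (mmul a b). apply (emb_mul Hf).
  - exists gone, gone. split; [exact S1 | split; [exact T1 | symmetry; apply gmul1]].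
Qed.

Lemma normalize_gsetmul (g h : G) (S T : G -> Prop) :
  normalizer g S -> normalizer h T ->
  normalize (gsetmul S T) = setmul (normalize S) (normalize T).
Proof.
  intros NS NT. apply (img_inj f _ _ (emb_inj Hf)).
  rewrite (img_setmul H G f _ _ (emb_mul Hf)),
    (img_normalize _ _ (normalizer_gsetmul g h S T NS NT)),
    (img_normalize g S NS), (img_normalize h T NT).
  apply translate_gsetmul.
Qed.

Lemma normalizer_img_exists (H' : cmonoid) (F : H' -> G) (X : H' -> Prop) :
  Pfin1 H' X -> exists g, normalizer g (img F X).
Proof.
  intros [FX X1]. apply normalizer_exists; [apply finite_img, FX|].
  exists (F mone). exists mone. auto.
Qed.

End Normalize.

Lemma Pfin1_iso_of_embeddings (H1 H2 : cmonoid) (G : cgroup) (f1 : H1 -> G) (f2 : H2 -> G) :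
  reduced_valuation_embedding f1 -> reduced_valuation_embedding f2 -> Pfin1_iso H1 H2.
Proof.
  intros E1 E2. exists (fun X => normalize f2 (img f1 X)).
  split; [|split; [|split; [|split]]].
  - intros X PX. destruct (normalizer_img_exists f2 E2 H1 f1 X PX) as [g N].
    exact (Pfin1_normalize f2 E2 g _ (finite_img f1 X (proj1 PX)) N).
  - intros X Y PX PY E.
    destruct (normalizer_img_exists f2 E2 H1 f1 X PX) as [gX NX].
    destruct (normalizer_img_exists f2 E2 H1 f1 Y PY) as [gY NY].
    rewrite <- (normalize_img f1 E1 X (proj2 PX)), <- (normalize_img f1 E1 Y (proj2 PY)).
    rewrite (normalize_inj f2 E2 gX gY _ _ NX NY E).
    exact (normalize_translate f1 E1 gone _ _ (normalizer_img f1 E1 Y (proj2 PY))).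
  - intros Y PY. destruct (normalizer_img_exists f1 E1 H2 f2 Y PY) as [g N].
    exists (normalize f1 (img f2 Y)). split.
    + exact (Pfin1_normalize f1 E1 g _ (finite_img f2 Y (proj1 PY)) N).
    + rewrite (img_normalize f1 E1 g _ N).
      rewrite (normalize_translate f2 E2 gone g _ (normalizer_img f2 E2 Y (proj2 PY))).
      exact (normalize_img f2 E2 Y (proj2 PY)).
  - rewrite (img_set1 H1 G f1 (emb_one E1)), <- (img_set1 H2 G f2 (emb_one E2)).
    apply (normalize_img f2 E2). reflexivity.
  - intros X Y PX PY.
    destruct (normalizer_img_exists f2 E2 H1 f1 X PX) as [gX NX].
    destruct (normalizer_img_exists f2 E2 H1 f1 Y PY) as [gY NY].
    rewrite (img_setmul H1 G f1 X Y (emb_mul E1)).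
    exact (normalize_gsetmul f2 E2 gX gY _ _ NX NY).
Qed.

Theorem theorem2 (H1 H2 : cmonoid) :
  valuation_monoid H1 -> reduced H1 ->
  valuation_monoid H2 -> reduced H2 ->
  (exists (G1 : cgroup) (f1 : H1 -> G1) (G2 : cgroup) (f2 : H2 -> G2),
      is_quotient_group H1 G1 f1 /\ is_quotient_group H2 G2 f2 /\ group_iso G1 G2) ->
  Pfin1_iso H1 H2.
Proof.
  intros V1 R1 V2 R2 [G1 [f1 [G2 [f2 [Q1 [Q2 [phi [Pi [Ps Pm]]]]]]]]].
  apply (Pfin1_iso_of_embeddings H1 H2 G2 (fun a => phi (f1 a)) f2).
  - apply embedding_comp_iso; [apply quotient_embedding | ..]; assumption.
  - apply quotient_embedding; assumption.
Qed.
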